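(* Let $T=(V,E)$ be a temporal bipartite graph with $m=|E|$ edges, let $\tau>0$, $i\in\{1,\dots,6\}$ and $\varepsilon,\delta\in(0,1)$. Then (a) if $p\ge\frac{1}{1+\delta\varepsilon^2}$, the estimator $\widehat{C}_i$ returned by \texttt{TBC-E} or by \texttt{TBC-N} with sampling probability $p$ is an $(\varepsilon,\delta)$-estimator of $C_i$; and (b) for any $c>0$, if $s\ge\frac{(m-1)\ln(2/\delta)}{(1+\varepsilon)\ln(1+\varepsilon)-\varepsilon}$, the estimator $\widehat{C}_i$ returned by \texttt{TBC-I} with parameters $s,c$ is an $(\varepsilon,\delta)$-estimator of $C_i$. Here $\widehat{C}_i$ is an $(\varepsilon,\delta)$-estimator of $C_i$ if $\Pr[|\widehat{C}_i-C_i|\ge\varepsilon C_i]\le\delta$.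
   Context: A temporal bipartite graph $T=(V,E)$ has node set $V=U\cup L$ with $U\cap L=\emptyset$ and a finite (multi)set $E\subseteq U\times L\times\mathbb{R}^+$ of temporal edges $(u,l,t)$; $m=|E|$. A temporal butterfly $B_i$ ($i=1,\dots,6$) is the butterfly on nodes $u'_1,u'_2$ (upper side) and $l'_1,l'_2$ (lower side) with edges $(u'_1,l'_1),(u'_2,l'_1),(u'_1,l'_2),(u'_2,l'_2)$ together with an ordering $\sigma_i$ of these four edges; $\sigma_1,\dots,\sigma_6$ are the six orderings in which $(u'_1,l'_1)$ comes first. Given $\tau>0$, a set $S$ of four temporal edges $\{(u_x,l_x,t_1),(u_y,l_x,t_2),(u_x,l_y,t_3),(u_y,l_y,t_4)\}$ of $T$ with $u_x\ne u_y\in U$, $l_x\ne l_y\in L$ is a $\tau$-instance of $B_i$ if, under the map $u_x\mapsto u'_1,u_y\mapsto u'_2,l_x\mapsto l'_1,l_y\mapsto l'_2$, the order of the four edges by timestamp matches $\sigma_i$ (so $(u_x,l_x,t_1)$ has the smallest timestamp), and $\max_{j\in\{2,3,4\}}t_j-t_1\le\tau$. $C_i$ is the number of $\tau$-instances of $B_i$ in $T$; for $e\in E$, $C_i(e)$ is the number of $\tau$-instances of $B_i$ whose first (smallest-timestamp) edge is $e$. \texttt{TBC-E}: each edge $e\in E$ is put into $\widehat{E}$ independently with probability $p$; output $\widehat{C}_i=\sum_{e\in\widehat{E}}C_i(e)/p$. \texttt{TBC-N}: each node $u\in U$ (alternatively, each node of $L$) is put into $\widehat{U}$ independently with probability $p$;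 $\widehat{E}$ is the set of edges incident to $\widehat{U}$; output $\widehat{C}_i=\sum_{e\in\widehat{E}}C_i(e)/p$. \texttt{TBC-I} with parameters $s\in\mathbb{Z}_{>0}$, $c>0$: draw $s$ edges from $E$ uniformly at random and independently; for each drawn edge with timestamp $t'$, add to the multiset $\widehat{E}$ every edge of $E$ with timestamp in $[t',t'+c\tau]$; for $e=(u,l,t)$ let $m'_e$ be the number of edges of $E$ with timestamp in $[t-c\tau,t]$; output $\widehat{C}_i=\sum_{e\in\widehat{E}}\frac{m}{s\,m'_e}C_i(e)$ (counting multiplicities). *)

From mathcomp Require Import all_boot all_order all_algebra.
From mathcomp Require Import reals exp.

Set Implicit Arguments.
Unset Strict Implicit.
Unset Printing Implicit Defensive.
Import Order.TTheory GRing.Theory Num.Theory.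
Local Open Scope ring_scope.

(* A temporal bipartite graph: upper nodes U, lower nodes L (two distinct
   finite types, hence disjoint), and a finite multiset of m temporal edges,
   given as a family E : 'I_m -> U * L * R (indices make repetitions
   possible).  Positivity of timestamps is a hypothesis of the theorem. *)

Section TBG.
Variables (R : realType) (U L : finType) (m : nat) (E : 'I_m -> U * L * R).

Definition eu (e : 'I_m) : U := (E e).1.1.
Definition el (e : 'I_m) : L := (E e).1.2.
Definition et (e : 'I_m) : R := (E e).2.

(* Roles of the four butterfly edges:
   0 = (u'1,l'1), 1 = (u'2,l'1), 2 = (u'1,l'2), 3 = (u'2,l'2).
   sigma i lists the roles in increasing time order; these are the six
   orderings with (u'1,l'1) first. *)
Definition sigma (i : 'I_6) : seq nat :=
  nth [:: 0; 1; 2; 3]%N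
    [:: [:: 0; 1; 2; 3]; [:: 0; 1; 3; 2]; [:: 0; 2; 1; 3];
        [:: 0; 2; 3; 1]; [:: 0; 3; 1; 2]; [:: 0; 3; 2; 1]]%N i.

(* (a,b,c,d) = ((u_x,l_x,t1),(u_y,l_x,t2),(u_x,l_y,t3),(u_y,l_y,t4)) is a
   tau-instance of B_i. *)
Definition is_instance (i : 'I_6) (tau : R) (a b c d : 'I_m) : bool :=
  let ts := [:: et a; et b; et c; et d] in
  [&& eu a == eu c, eu b == eu d, el a == el b, el c == el d,
      eu a != eu b, el a != el c,
      [forall k : 'I_3,
         nth 0 ts (nth 0%N (sigma i) k) < nth 0 ts (nth 0%N (sigma i) k.+1)],
      et b - et a <= tau, et c - et a <= tau & et d - et a <= tau].

Definition count_inst (i : 'I_6) (tau : R) : R :=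
  #|[set x : 'I_m * 'I_m * 'I_m * 'I_m |
      is_instance i tau x.1.1.1 x.1.1.2 x.1.2 x.2]|%:R.

Definition count_inst_e (i : 'I_6) (tau : R) (e : 'I_m) : R :=
  #|[set x : 'I_m * 'I_m * 'I_m | is_instance i tau e x.1.1 x.1.2 x.2]|%:R.

(* TBC-E : outcome w : {ffun 'I_m -> bool} (w e = e sampled). *)
Definition tbcE_weight (p : R) (w : {ffun 'I_m -> bool}) : R :=
  \prod_(e : 'I_m) (if w e then p else 1 - p).
Definition tbcE_est (i : 'I_6) (tau p : R) (w : {ffun 'I_m -> bool}) : R :=
  \sum_(e : 'I_m | w e) count_inst_e i tau e / p.

Definition tbcNU_weight (p : R) (w : {ffun U -> bool}) : R :=
  \prod_(u : U) (if w u then p else 1 - p).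
Definition tbcNU_est (i : 'I_6) (tau p : R) (w : {ffun U -> bool}) : R :=
  \sum_(e : 'I_m | w (eu e)) count_inst_e i tau e / p.

Definition tbcNL_weight (p : R) (w : {ffun L -> bool}) : R :=
  \prod_(l : L) (if w l then p else 1 - p).
Definition tbcNL_est (i : 'I_6) (tau p : R) (w : {ffun L -> bool}) : R :=
  \sum_(e : 'I_m | w (el e)) count_inst_e i tau e / p.

(* TBC-I : outcome w : {ffun 'I_s -> 'I_m}, the s independent uniform draws. *)
Definition tbcI_weight (s : nat) (w : {ffun 'I_s -> 'I_m}) : R :=
  (m%:R ^+ s)^-1.
Definition mprime (c tau : R) (e : 'I_m) : R :=
  #|[set f : 'I_m | (et e - c * tau <= et f) && (et f <= et e)]|%:R.
(* sum over the multiset \hat E (one copy per draw whose window contains e) *)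
Definition tbcI_est (i : 'I_6) (tau c : R) (s : nat)
    (w : {ffun 'I_s -> 'I_m}) : R :=
  \sum_(j : 'I_s)
    \sum_(e : 'I_m | (et (w j) <= et e) && (et e <= et (w j) + c * tau))
      m%:R / (s%:R * mprime c tau e) * count_inst_e i tau e.

End TBG.

Definition prob (R : realType) (Omega : finType) (wt : Omega -> R)
    (A : pred Omega) : R :=
  \sum_(w : Omega | A w) wt w.

Definition eps_delta_estimator (R : realType) (Omega : finType)
    (wt : Omega -> R) (X : Omega -> R) (C eps delta : R) : Prop :=
  prob wt (fun w => eps * C <= `|X w - C|) <= delta.

From mathcomp Require Import all_boot all_order all_algebra.
From mathcomp Require Import reals exp.
From mathcomp Require Import boolp topology normedtype sequences.
From mathcomp Require Import ring lra.

(* (a) Under edge or node sampling the estimate is a sum of per-item counts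
   a_u, each kept independently with probability p and reweighted by 1/p.  Its
   variance is (1-p)/p * sum a_u^2 <= (1-p)/p * C^2 and (1-p)/p <= delta eps^2,
   so Chebyshev's inequality concludes.
   (b) The TBC-I estimate is a sum of s i.i.d. uniform draws of a nonnegative
   window contribution of mean C/s.  A centred draw is at most (m-1) C/s and
   has variance at most (m-1) (C/s)^2, so Bennett's inequality bounds each tail
   by exp (- s h(eps) / (m-1)) <= delta/2, where h(u) = (1+u) ln(1+u) - u. *)

Set Implicit Arguments.
Unset Strict Implicit.
Unset Printing Implicit Defensive.
Import Order.TTheory GRing.Theory Num.Theory numFieldNormedType.Exports.
Local Open Scope ring_scope.

Section ExpInequalities.
Local Open Scope classical_set_scope.
Variable R : realType.
Implicit Types x z : R.

Lemma series_exp_coeff_le_expR x n : 0 <= x -> series (exp_coeff x) n <= expR x.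
Proof.
move=> x0; apply: (cvgr_to_ge (is_cvg_series_exp_coeff x)); exists n => // k /=.
elim: k => [|k IHk]; first by rewrite leqn0 => /eqP ->.
rewrite leq_eqVlt ltnS => /predU1P[<- //|/IHk/le_trans]; apply.
by rewrite seriesSr lerDl /exp_coeff /= divr_ge0 ?exprn_ge0.
Qed.

Lemma expR_ge_taylor3 x : 0 <= x -> 1 + x + x ^+ 2 / 2 + x ^+ 3 / 6 <= expR x.
Proof.
move=> x0; have := series_exp_coeff_le_expR 4 x0.
rewrite !seriesSr /series /exp_coeff /= big_geq // add0r !factS fact0.
by rewrite expr0 expr1 !divr1.
Qed.

Lemma expR_ge_taylor2 x : 0 <= x -> 1 + x + x ^+ 2 / 2 <= expR x.
Proof.
move=> x0; apply: le_trans (expR_ge_taylor3 x0).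
by rewrite lerDl divr_ge0 ?exprn_ge0.
Qed.

Lemma expR_le_taylor2 z : z <= 0 -> expR z <= 1 + z + z ^+ 2 / 2.
Proof.
move=> z0; set w := - z; have w0 : 0 <= w by rewrite oppr_ge0.
have -> : z = - w by rewrite opprK.
set q := 1 - w + w ^+ 2 / 2; have q0 : 0 < q by rewrite /q; nra.
have q_taylor3 : 1 <= q * (1 + w + w ^+ 2 / 2 + w ^+ 3 / 6).
  have -> : q * (1 + w + w ^+ 2 / 2 + w ^+ 3 / 6)
            = 1 + w ^+ 3 / 6 + w ^+ 4 / 12 + w ^+ 5 / 12.
    by rewrite /q !exprS expr0; field.
  by rewrite -!addrA lerDl !addr_ge0 // divr_ge0 // exprn_ge0.
have : 1 <= q * expR w.
  by apply: le_trans q_taylor3 _; rewrite ler_wpM2l ?expR_ge_taylor3 // ltW.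
by rewrite expRN -div1r ler_pdivrMr ?expR_gt0 // sqrrN.
Qed.

(* Monotonicity of [(expR z - 1 - z) / z ^+ 2], stated without division. *)
Lemma expR_rem_ratio_le_nonneg z x : 0 <= z -> z <= x ->
  x ^+ 2 * (expR z - 1 - z) <= z ^+ 2 * (expR x - 1 - x).
Proof.
move=> z0 zx; have x0 := le_trans z0 zx.
have term_le n : (2 <= n)%N -> x ^+ 2 * z ^+ n <= z ^+ 2 * x ^+ n.
  move=> /subnKC <-; rewrite !exprD mulrCA !ler_wpM2l ?exprn_ge0 //.
  by rewrite lerXn2r ?nnegrE.
pose u n := z ^+ 2 * series (exp_coeff x) n - x ^+ 2 * series (exp_coeff z) n.
have u_cvg : u n @[n --> \oo] --> z ^+ 2 * expR x - x ^+ 2 * expR z.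
  by apply: cvgB; apply: cvgMl_tmp; exact: is_cvg_series_exp_coeff.
have u_ge n : (2 <= n)%N -> z ^+ 2 * (1 + x) - x ^+ 2 * (1 + z) <= u n.
  elim: n => [//|n IHn]; rewrite leq_eqVlt => /predU1P[<-|n2].
    rewrite /u !seriesSr /series /exp_coeff /= !big_geq // !add0r.
    by rewrite !expr0 !expr1 !divr1.
  apply: le_trans (IHn n2) _; rewrite /u !seriesSr /exp_coeff /= !mulrDr !mulrA.
  have : x ^+ 2 * z ^+ n / n`!%:R <= z ^+ 2 * x ^+ n / n`!%:R.
    by rewrite ler_wpM2r ?invr_ge0 ?term_le.
  lra.
have : z ^+ 2 * (1 + x) - x ^+ 2 * (1 + z) <= z ^+ 2 * expR x - x ^+ 2 * expR z.
  by apply: (cvgr_to_ge u_cvg); exists 2%N.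
lra.
Qed.

Lemma expR_rem_ratio_le z x : z <= x -> 0 <= x ->
  x ^+ 2 * (expR z - 1 - z) <= z ^+ 2 * (expR x - 1 - x).
Proof.
move=> zx x0; have [z0|z_neg] := leP 0 z; first exact: expR_rem_ratio_le_nonneg.
have ez := expR_le_taylor2 (ltW z_neg); have ex := expR_ge_taylor2 x0.
apply: (@le_trans _ _ (x ^+ 2 * (z ^+ 2 / 2))).
  by rewrite ler_wpM2l ?sqr_ge0 //; lra.
by rewrite mulrCA ler_wpM2l ?sqr_ge0 //; lra.
Qed.

Lemma expR_le_bennett z b : z <= b -> 0 < b ->
  expR z <= 1 + z + z ^+ 2 * ((expR b - 1 - b) / b ^+ 2).
Proof.
move=> zb b0; have b2 : 0 < b ^+ 2 by rewrite exprn_gt0.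
have : expR z - 1 - z <= z ^+ 2 * ((expR b - 1 - b) / b ^+ 2).
  by rewrite mulrA ler_pdivlMr // mulrC expR_rem_ratio_le // ltW.
lra.
Qed.

Definition bennett_h (u : R) : R := (1 + u) * ln (1 + u) - u.

Lemma bennett_h_gt0 (u : R) : 0 < u -> 0 < bennett_h u.
Proof.
rewrite /bennett_h => u0; have u1 : 0 < 1 + u by lra.
set l := ln (1 + u); have l0 : 0 < l by rewrite ln_gt0 // ltrDl.
have /expR_gt1Dx : - l != 0 by rewrite oppr_eq0 gt_eqF.
rewrite expRN lnK ?posrE // -div1r ltr_pdivlMr //; nra.
Qed.
End ExpInequalities.

Section FiniteProbability.
Variables (R : realFieldType) (T : finType).
Implicit Types wt F : T -> R.

Lemma markov_sum wt F a : (forall w, 0 <= wt w) -> (forall w, 0 <= F w) -> 0 < a ->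
  \sum_(w | a <= F w) wt w <= (\sum_w wt w * F w) / a.
Proof.
move=> wt0 F0 a0; rewrite ler_pdivlMr // mulr_suml.
apply: (@le_trans _ _ (\sum_(w | a <= F w) wt w * F w)).
  by apply: ler_sum => w aF; rewrite ler_wpM2l.
rewrite [leRHS](bigID (fun w => a <= F w)) /= lerDl.
by apply: sumr_ge0 => w _; rewrite mulr_ge0.
Qed.

Lemma ler_sum_predU wt (P Q1 Q2 : pred T) : (forall w, 0 <= wt w) ->
  (forall w, P w -> Q1 w || Q2 w) ->
  \sum_(w | P w) wt w <= \sum_(w | Q1 w) wt w + \sum_(w | Q2 w) wt w.
Proof.
move=> wt0 PQ; rewrite (big_mkcond P) (big_mkcond Q1) (big_mkcond Q2) -big_split /=.
apply: ler_sum => w _.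
case: ifP => [/PQ/orP[]->|_]; last by rewrite addr_ge0 //; case: ifP.
- by rewrite lerDl; case: ifP.
- by rewrite lerDr; case: ifP.
Qed.

Lemma sum_sqr_le_sqr_sum (a : T -> R) : (forall x, 0 <= a x) ->
  \sum_x a x ^+ 2 <= (\sum_x a x) ^+ 2.
Proof.
move=> a0; rewrite [leRHS]expr2 mulr_suml; apply: ler_sum => x _.
by rewrite expr2 ler_wpM2l // (bigD1 x) //= lerDl sumr_ge0.
Qed.
End FiniteProbability.

Section BernoulliSampling.
Variables (R : realType) (I : finType) (p : R).
Hypotheses (p_gt0 : 0 < p) (p_le1 : p <= 1).

(* [tbcE_weight], [tbcNU_weight] and [tbcNL_weight] are instances. *)
Definition bernoulli_weight (w : {ffun I -> bool}) : R :=
  \prod_u (if w u then p else 1 - p).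

Definition centered_indicator (w : {ffun I -> bool}) u : R := (w u)%:R - p.

Lemma bernoulli_weight_ge0 w : 0 <= bernoulli_weight w.
Proof. by apply: prodr_ge0 => u _; case: (w u); rewrite ?subr_ge0 // ltW. Qed.

Lemma bernoulli_covariance u v :
  \sum_w bernoulli_weight w * (centered_indicator w u * centered_indicator w v)
  = (u == v)%:R * (p * (1 - p)).
Proof.
pose G t (b : bool) : R := (if b then p else 1 - p) *
  ((if t == u then b%:R - p else 1) * (if t == v then b%:R - p else 1)).
have prod_if1 (y : I) (H : I -> R) : \prod_t (if t == y then H t else 1) = H y.
  by rewrite -big_mkcond big_pred1_eq.
transitivity (\sum_(w : {ffun I -> bool}) \prod_t G t (w t)).
  by apply: eq_bigr => w _; rewrite !big_split /= !prod_if1.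
rewrite -bigA_distr_bigA /=; under eq_bigr do rewrite big_bool /G /=.
case: eqVneq => [<-|uv]; rewrite (bigD1 u) //= eqxx.
  by rewrite big1 => [|t /negPf ->]; ring.
by rewrite (negPf uv) [X in X * _](_ : _ = 0) ?mul0r //; ring.
Qed.

Lemma bernoulli_variance (b : I -> R) :
  \sum_w bernoulli_weight w * (\sum_u centered_indicator w u * b u) ^+ 2
  = p * (1 - p) * \sum_u b u ^+ 2.
Proof.
transitivity (\sum_u \sum_v b u * b v *
    \sum_w bernoulli_weight w * (centered_indicator w u * centered_indicator w v)).
  transitivity (\sum_w \sum_u \sum_v
      b u * b v *
      (bernoulli_weight w * (centered_indicator w u * centered_indicator w v))).
    apply: eq_bigr => w _; rewrite expr2 mulr_suml mulr_sumr.
    apply: eq_bigr => u _; rewrite !mulr_sumr.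
    by apply: eq_bigr => v _; ring.
  rewrite exchange_big; apply: eq_bigr => u _.
  by rewrite exchange_big; apply: eq_bigr => v _; rewrite mulr_sumr.
rewrite mulr_sumr; apply: eq_bigr => u _.
under eq_bigr do rewrite bernoulli_covariance.
rewrite (bigD1 u) //= eqxx big1 => [|v /negPf vu].
  by rewrite /= addr0; ring.
by rewrite eq_sym vu mul0r mulr0.
Qed.

Lemma bernoulli_estimator (a : I -> R) (eps delta : R) :
  (forall u, 0 <= a u) -> 0 < \sum_u a u ->
  (1 + delta * eps ^+ 2)^-1 <= p -> 0 < eps -> 0 < delta ->
  eps_delta_estimator bernoulli_weight (fun w => \sum_(u | w u) a u / p)
    (\sum_u a u) eps delta.
Proof.
move=> a0 C0 hp eps0 delta0; rewrite /eps_delta_estimator /prob.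
set C := \sum_u a u.
have dev (w : {ffun I -> bool}) :
    \sum_(u | w u) a u / p - C = \sum_u centered_indicator w u * (a u / p).
  rewrite /C big_mkcond /= -sumrB; apply: eq_bigr => u _.
  by rewrite /centered_indicator; case: (w u) => /=; field; rewrite gt_eqF.
have epsC0 : 0 < eps * C by rewrite mulr_gt0.
have odds_le : (1 - p) / p <= delta * eps ^+ 2.
  set q := delta * eps ^+ 2 in hp *.
  have q0 : 0 < 1 + q by rewrite addr_gt0 // mulr_gt0 // exprn_gt0.
  rewrite -div1r ler_pdivrMr // mulrDr mulr1 in hp.
  rewrite ler_pdivrMr //; lra.
rewrite (eq_bigl (fun w : {ffun I -> bool} =>
  (eps * C) ^+ 2 <= (\sum_(u | w u) a u / p - C) ^+ 2)); last first.
  by move=> w; rewrite -[(_ - C) ^+ 2]real_normK ?num_real // ler_sqr ?nnegrE // ltW.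
apply: le_trans (markov_sum bernoulli_weight_ge0 (fun w => sqr_ge0 _)
  (exprn_gt0 2 epsC0)) _.
under eq_bigr do rewrite dev.
rewrite bernoulli_variance ler_pdivrMr ?exprn_gt0 //.
have -> : p * (1 - p) * \sum_u (a u / p) ^+ 2 = (1 - p) / p * \sum_u a u ^+ 2.
  by rewrite !mulr_sumr; apply: eq_bigr => u _; field; rewrite gt_eqF.
have odds_ge0 : 0 <= (1 - p) / p by rewrite divr_ge0 ?subr_ge0 // ltW.
apply: le_trans (ler_wpM2l odds_ge0 (sum_sqr_le_sqr_sum a0)) _.
by rewrite [in leRHS]exprMn [in leRHS]mulrA ler_wpM2r ?sqr_ge0.
Qed.

Lemma keyed_bernoulli_estimator (T : finType) (key : T -> I) (c : T -> R)
    (eps delta : R) :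
  (forall e, 0 <= c e) -> 0 < \sum_e c e ->
  (1 + delta * eps ^+ 2)^-1 <= p -> 0 < eps -> 0 < delta ->
  eps_delta_estimator bernoulli_weight (fun w => \sum_(e | w (key e)) c e / p)
    (\sum_e c e) eps delta.
Proof.
move=> c0; rewrite (partition_big key xpredT) //= => C0.
have -> : (fun w : {ffun I -> bool} => \sum_(e | w (key e)) c e / p)
    = (fun w => \sum_(u | w u) (\sum_(e | key e == u) c e) / p).
  apply/funext => w; rewrite (partition_big key w) //=.
  apply: eq_bigr => u wu; rewrite mulr_suml; apply: eq_bigl => e.
  by case: eqP => [->|]; rewrite ?wu ?andbF.
by apply: bernoulli_estimator => // u; apply: sumr_ge0.
Qed.
End BernoulliSampling.

Section UniformDraws.
Variables (R : realType) (m s : nat).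
Implicit Types (g f : 'I_m -> R).

Lemma sum_ffun_expR_sum (J : finType) (h : 'I_m -> R) :
  \sum_(w : {ffun J -> 'I_m}) expR (\sum_j h (w j)) = (\sum_x expR (h x)) ^+ #|J|.
Proof.
transitivity (\sum_(w : {ffun J -> 'I_m}) \prod_j expR (h (w j))).
  by apply: eq_bigr => w _; rewrite expR_sum.
by rewrite -(bigA_distr_bigA (fun _ x => expR (h x))) prodr_const.
Qed.

Lemma chernoff_uniform_draws g (lam a : R) : 0 < lam ->
  \sum_(w : {ffun 'I_s -> 'I_m} | a <= \sum_j g (w j)) (m%:R ^+ s)^-1
    <= expR (- (lam * a)) * ((\sum_x expR (lam * g x)) / m%:R) ^+ s.
Proof.
move=> lam0; have c0 : 0 <= (m%:R ^+ s)^-1 :> R by rewrite invr_ge0 exprn_ge0.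
rewrite (eq_bigl (fun w : {ffun 'I_s -> 'I_m} =>
  expR (lam * a) <= expR (\sum_j lam * g (w j)))); last first.
  by move=> w; rewrite -mulr_sumr ler_expR ler_pM2l.
apply: le_trans (markov_sum (fun=> c0) (fun w => expR_ge0 _) (expR_gt0 _)) _.
rewrite -mulr_sumr (sum_ffun_expR_sum _ (fun x => lam * g x)) card_ord.
by rewrite expRN expr_div_n [leRHS]mulrC [_ * m%:R ^- s]mulrC.
Qed.

Lemma bennett_mgf_bound g (b v L : R) : 0 < b -> 0 < L ->
  \sum_x g x = 0 -> (forall x, g x <= b) -> \sum_x g x ^+ 2 <= m%:R * v ->
  \sum_x expR (L / b * g x) <= m%:R * expR (v / b ^+ 2 * (expR L - 1 - L)).
Proof.
move=> b0 L0 g_sum0 g_le g_sqr; set phi := expR L - 1 - L.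
have phi0 : 0 <= phi by have := expR_ge1Dx L; rewrite /phi; lra.
have pointwise x : expR (L / b * g x) <= 1 + L / b * g x + g x ^+ 2 * (phi / b ^+ 2).
  have gL : L / b * g x <= L by rewrite mulrAC ler_pdivrMr // ler_pM2l.
  apply: le_trans (expR_le_bennett gL L0) _; rewrite lerD2l le_eqVlt; apply/orP; left.
  by apply/eqP; rewrite /phi; field; rewrite !gt_eqF.
apply: le_trans (ler_sum _ (fun x _ => pointwise x)) _.
rewrite !big_split /= sumr_const card_ord -mulr_sumr g_sum0 mulr0 addr0 -mulr_suml.
apply: (@le_trans _ _ (m%:R * (1 + v / b ^+ 2 * phi))); last first.
  by rewrite ler_wpM2l ?ler0n ?expR_ge1Dx.
rewrite mulrDr mulr1 lerD2l.
apply: le_trans (ler_wpM2r _ g_sqr) _; first by rewrite divr_ge0 ?sqr_ge0.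
by rewrite le_eqVlt; apply/orP; left; apply/eqP; field; rewrite gt_eqF.
Qed.

Lemma bennett_upper_tail g (b v t : R) : (0 < m)%N -> 0 < b -> 0 < v -> 0 < t ->
  \sum_x g x = 0 -> (forall x, g x <= b) -> \sum_x g x ^+ 2 <= m%:R * v ->
  \sum_(w : {ffun 'I_s -> 'I_m} | s%:R * t <= \sum_j g (w j)) (m%:R ^+ s)^-1
    <= expR (- (s%:R * (v / b ^+ 2) * bennett_h (b * t / v))).
Proof.
move=> m0 b0 v0 t0 g_sum0 g_le g_sqr; have m_gt0 : 0 < m%:R :> R by rewrite ltr0n.
set u := b * t / v; have u0 : 0 < u by rewrite divr_gt0 ?mulr_gt0.
set L := ln (1 + u); have L0 : 0 < L by rewrite ln_gt0 // ltrDl.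
have eL : expR L = 1 + u by rewrite lnK // posrE; lra.
have L_b0 : 0 < L / b by rewrite divr_gt0.
apply: le_trans (chernoff_uniform_draws _ _ L_b0) _.
have mgf := bennett_mgf_bound b0 L0 g_sum0 g_le g_sqr.
rewrite -ler_pdivrMl // mulrC in mgf.
apply: le_trans (ler_wpM2l (expR_ge0 _) (lerXn2r _ _ _ mgf)) _.
- by rewrite nnegrE divr_ge0 ?ler0n ?sumr_ge0 // => x _; rewrite expR_ge0.
- by rewrite nnegrE expR_ge0.
rewrite -expRM_natl -expRD ler_expR eL le_eqVlt; apply/orP; left; apply/eqP.
by rewrite /bennett_h /u -/L; field; rewrite !gt_eqF.
Qed.

Lemma bennett_tail_le_half g (mu eps delta : R) :
  (1 < m)%N -> 0 < mu -> 0 < eps -> 0 < delta ->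
  \sum_x g x = 0 -> (forall x, g x <= (m%:R - 1) * mu) ->
  \sum_x g x ^+ 2 <= m%:R * ((m%:R - 1) * mu ^+ 2) ->
  (m%:R - 1) * ln (2 / delta) / bennett_h eps <= s%:R ->
  \sum_(w : {ffun 'I_s -> 'I_m} | eps * (s%:R * mu) <= \sum_j g (w j)) (m%:R ^+ s)^-1
    <= delta / 2.
Proof.
move=> m1 mu0 eps0 delta0 g_sum0 g_le g_sqr s_ge.
pose k : R := m%:R - 1; rewrite -/k in g_le g_sqr s_ge.
have k0 : 0 < k by rewrite subr_gt0 ltr1n.
have h0 := bennett_h_gt0 eps0.
rewrite mulrCA.
apply: le_trans (bennett_upper_tail (ltnW m1) _ _ _ g_sum0 g_le g_sqr) _.
- by rewrite mulr_gt0.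
- by rewrite mulr_gt0 ?exprn_gt0.
- by rewrite mulr_gt0.
have -> : k * mu * (eps * mu) / (k * mu ^+ 2) = eps by field; rewrite !gt_eqF.
have -> : k * mu ^+ 2 / (k * mu) ^+ 2 = k^-1 by field; rewrite !gt_eqF.
have -> : delta / 2 = expR (- ln (2 / delta)).
  by rewrite expRN lnK ?posrE ?divr_gt0 // invf_div.
rewrite ler_expR lerN2 mulrAC ler_pdivlMr // mulrC.
by rewrite ler_pdivrMr // in s_ge.
Qed.

Lemma sum_sqr_centered_le f (mu : R) : (forall x, 0 <= f x) ->
  \sum_x f x = m%:R * mu -> \sum_x (f x - mu) ^+ 2 <= m%:R * ((m%:R - 1) * mu ^+ 2).
Proof.
move=> f0 sum_f.
have pointwise x : (f x - mu) ^+ 2 <= (m%:R - 2) * mu * f x + mu ^+ 2.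
  have f_le : f x <= m%:R * mu by rewrite -sum_f (bigD1 x) //= lerDl sumr_ge0.
  have : f x * f x <= m%:R * mu * f x by rewrite ler_wpM2r.
  by rewrite expr2; nra.
apply: le_trans (ler_sum _ (fun x _ => pointwise x)) _.
rewrite big_split /= -mulr_sumr sum_f sumr_const card_ord -mulr_natl.
by rewrite le_eqVlt; apply/orP; left; apply/eqP; ring.
Qed.

Lemma uniform_draws_estimator f (C eps delta : R) :
  (1 < m)%N -> (0 < s)%N -> (forall x, 0 <= f x) -> 0 < C ->
  \sum_x f x = m%:R / s%:R * C -> 0 < eps -> 0 < delta ->
  (m%:R - 1) * ln (2 / delta) / bennett_h eps <= s%:R ->
  eps_delta_estimator (fun _ : {ffun 'I_s -> 'I_m} => (m%:R ^+ s)^-1)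
    (fun w => \sum_j f (w j)) C eps delta.
Proof.
move=> m1 s0 f0 C0 f_sum eps0 delta0 s_ge.
set mu := C / s%:R; have mu0 : 0 < mu by rewrite divr_gt0 ?ltr0n.
have C_eq : C = s%:R * mu by rewrite /mu mulrC divfK ?pnatr_eq0 -?lt0n.
have sum_f : \sum_x f x = m%:R * mu by rewrite f_sum /mu mulrA mulrAC.
have c0 (w : {ffun 'I_s -> 'I_m}) : 0 <= (m%:R ^+ s)^-1 :> R.
  by rewrite invr_ge0 exprn_ge0.
pose draw_sum (h : 'I_m -> R) (w : {ffun 'I_s -> 'I_m}) := \sum_j h (w j).
rewrite /eps_delta_estimator /prob (splitr delta).
apply: le_trans (ler_sum_predU
  (P := fun w => eps * C <= `|draw_sum f w - C|)
  (Q1 := fun w => eps * C <= draw_sum (fun x => f x - mu) w)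
  (Q2 := fun w => eps * C <= draw_sum (fun x => mu - f x) w) c0 _) _.
  move=> w /=; have dev : draw_sum (fun x => f x - mu) w = draw_sum f w - C.
    by rewrite /draw_sum sumrB sumr_const card_ord C_eq mulr_natl.
  have -> : draw_sum (fun x => mu - f x) w = - (draw_sum f w - C).
    by rewrite -dev /draw_sum -sumrN; apply: eq_bigr => j _; rewrite opprB.
  rewrite dev; case: (lerP 0 (draw_sum f w - C)) => [/ger0_norm|/ltr0_norm] -> ->;
    by rewrite ?orbT.
rewrite C_eq; apply: lerD; apply: bennett_tail_le_half => //.
- by rewrite sumrB sum_f sumr_const card_ord mulr_natl subrr.
- by move=> x; rewrite mulrBl mul1r lerD2r -sum_f (bigD1 x) //= lerDl sumr_ge0.
- exact: sum_sqr_centered_le.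
- by rewrite sumrB sum_f sumr_const card_ord mulr_natl subrr.
- have k1 : 1 <= m%:R - 1 :> R by rewrite lerBrDr -(natrD R 1 1) ler_nat.
  move=> x; apply: (@le_trans _ _ mu); first by rewrite lerBlDr lerDl.
  by rewrite ler_peMl // ltW.
- rewrite (eq_bigr (fun x => (f x - mu) ^+ 2)) => [|x _]; last by rewrite -opprB sqrrN.
  exact: sum_sqr_centered_le.
Qed.
End UniformDraws.

Lemma card_set_sum (T : finType) (P : pred T) : #|[set x | P x]| = (\sum_x P x)%N.
Proof.
rewrite -sum1_card big_mkcond /=; apply: eq_bigr => x _.
by rewrite inE; case: (P x).
Qed.

Lemma sum_pair (I J : finType) (G : I * J -> nat) :
  (\sum_(q : I * J) G q = \sum_i \sum_j G (i, j))%N.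
Proof. by rewrite pair_bigA; apply: eq_bigr => -[]. Qed.

Section TemporalButterflies.
Variables (R : realType) (U L : finType) (m : nat) (E : 'I_m -> U * L * R).
Variables (i : 'I_6) (tau : R).

Lemma count_inst_sum : count_inst E i tau = \sum_e count_inst_e E i tau e.
Proof.
rewrite /count_inst /count_inst_e -natr_sum card_set_sum !sum_pair.
by congr _%:R; apply: eq_bigr => a _; rewrite card_set_sum !sum_pair.
Qed.

Lemma count_inst_gt0_edges_gt1 : 0 < count_inst E i tau -> (1 < m)%N.
Proof.
rewrite ltr0n card_gt0 => /set0Pn[[[[a b] c] d]]; rewrite inE /is_instance /=.
case/and5P=> _ _ _ _ /andP[ab _].
have {}ab : a != b by apply: contraNneq ab => ->.
by move: (max_card [set a; b]); rewrite cards2 ab card_ord.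
Qed.

Variable c : R.
Hypothesis ct_ge0 : 0 <= c * tau.

Lemma mprime_gt0 e : 0 < mprime E c tau e.
Proof.
rewrite ltr0n card_gt0; apply/set0Pn; exists e.
by rewrite inE lexx andbT lerBlDr lerDl.
Qed.

(* The share of one draw in the TBC-I estimate: [tbcI_est E i tau c w] is
   [\sum_j window_contribution s (w j)] by definition. *)
Definition window_contribution (s : nat) (x : 'I_m) : R :=
  \sum_(e | (et E x <= et E e) && (et E e <= et E x + c * tau))
    m%:R / (s%:R * mprime E c tau e) * count_inst_e E i tau e.

Lemma window_contribution_ge0 s x : 0 <= window_contribution s x.
Proof.
by apply: sumr_ge0 => e _; rewrite mulr_ge0 ?divr_ge0 ?mulr_ge0 ?ler0n.
Qed.

Lemma sum_window_contribution s : (0 < s)%N ->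
  \sum_x window_contribution s x = m%:R / s%:R * count_inst E i tau.
Proof.
move=> s0; rewrite /window_contribution count_inst_sum mulr_sumr.
under eq_bigr do rewrite big_mkcond.
rewrite exchange_big /=; apply: eq_bigr => e _; rewrite -big_mkcond /=.
(* [e] lies in exactly [mprime e] draw windows, which its weight compensates. *)
rewrite sumr_const -[_ *+ #|_|]mulr_natl.
have -> : #|[pred x | (et E x <= et E e) && (et E e <= et E x + c * tau)]|%:R
          = mprime E c tau e.
  by rewrite /mprime; congr _%:R; apply: eq_card => x; rewrite !inE lerBlDr andbC.
by field; rewrite pnatr_eq0 -lt0n s0 gt_eqF ?mprime_gt0.
Qed.

End TemporalButterflies.

Theorem theorem4p3 (R : realType) (U L : finType) (m : nat)
    (E : 'I_m -> U * L * R) (tau : R) (i : 'I_6) (eps delta : R) :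
  (forall e : 'I_m, 0 < et E e) ->
  0 < tau ->
  0 < eps < 1 -> 0 < delta < 1 ->
  0 < count_inst E i tau ->
  (forall p : R, (1 + delta * eps ^+ 2)^-1 <= p -> p <= 1 ->
     [/\ eps_delta_estimator (tbcE_weight p) (tbcE_est E i tau p)
           (count_inst E i tau) eps delta,
         eps_delta_estimator (tbcNU_weight p) (tbcNU_est E i tau p)
           (count_inst E i tau) eps delta &
         eps_delta_estimator (tbcNL_weight p) (tbcNL_est E i tau p)
           (count_inst E i tau) eps delta]) /\
  (forall (c : R) (s : nat), 0 < c -> (0 < s)%N ->
     (m%:R - 1) * ln (2 / delta) / ((1 + eps) * ln (1 + eps) - eps) <= s%:R ->
     eps_delta_estimator (@tbcI_weight R m s) (tbcI_est E i tau c (s:=s))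
       (count_inst E i tau) eps delta).
Proof.
move=> _ tau0 /andP[eps0 _] /andP[delta0 _] C0; split.
  move=> p hp p1; have p0 : 0 < p.
    by apply: lt_le_trans hp; rewrite invr_gt0 ltr_wpDr ?mulr_ge0 ?sqr_ge0 ?ltW.
  have C_ge0 e : 0 <= count_inst_e E i tau e by apply: ler0n.
  rewrite count_inst_sum in C0 *.
  by split; [apply: (keyed_bernoulli_estimator p0 p1 id) |
             apply: (keyed_bernoulli_estimator p0 p1 (eu E)) |
             apply: (keyed_bernoulli_estimator p0 p1 (el E))].
move=> c s c0 s0 s_ge; have ct : 0 <= c * tau by rewrite mulr_ge0 ?ltW.
apply: (uniform_draws_estimator (f := window_contribution E i tau c s)
  (count_inst_gt0_edges_gt1 C0) s0 _ C0 _ eps0 delta0 s_ge).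
- exact: window_contribution_ge0.
- exact: (sum_window_contribution E i ct s0).
Qed.
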